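(* Let $G$ be a connected diamond-free graph in which every induced $P_4$ is settled. Then either $G$ is complete bipartite, or every edge $uv\in E(G)$ such that $\{u,v\}$ is a maximal clique of $G$ is a simplicial clique of $G$.
   Context: An induced $P_4$ $(a,b,c,d)$ (path $a-b-c-d$, induced) is settled if $G$ has a vertex adjacent to both $b$ and $c$ and non-adjacent to both $a$ and $d$. A vertex $v$ is simplicial if $N[v]$ is a clique; a clique is simplicial if it equals $N[v]$ for some simplicial vertex $v$. The diamond is $K_4$ minus one edge; diamond-free means no induced diamond. *)

From mathcomp Require Import all_boot.
Set Implicit Arguments. Unset Strict Implicit. Unset Printing Implicit Defensive.

Section Graphs.
Variable T : finType.
Variable e : rel T.

Definition simple_graph : Prop := symmetric e /\ irreflexive e.

Definition connected_graph : Prop := forall x y : T, connect e x y.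

Definition closed_nbhd (v : T) : {set T} := [set x | (x == v) || e v x].

Definition is_clique (K : {set T}) : Prop :=
  forall x y, x \in K -> y \in K -> x != y -> e x y.

Definition simplicial (v : T) : Prop := is_clique (closed_nbhd v).

Definition simplicial_clique (K : {set T}) : Prop :=
  exists v, simplicial v /\ K = closed_nbhd v.

Definition maximal_clique (K : {set T}) : Prop :=
  is_clique K /\ forall K' : {set T}, is_clique K' -> K \subset K' -> K' = K.

(* (a,b,c,d) induces the path a-b-c-d (distinctness follows from simplicity) *)
Definition induced_P4 (a b c d : T) : Prop :=
  [/\ e a b, e b c, e c d & [/\ ~~ e a c, ~~ e b d & ~~ e a d]].

Definition settled (a b c d : T) : Prop :=
  exists w, [/\ e w b, e w c, ~~ e w a & ~~ e w d].

Definition diamond_free : Prop :=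
  ~ exists x y u v : T,
      [/\ x != y, ~~ e x y, e u v & [/\ e u x, e u y, e v x & e v y]].

Definition complete_bipartite : Prop :=
  exists A : {set T}, A != set0 /\ ~: A != set0 /\
    forall x y, e x y = ((x \in A) != (y \in A)).

End Graphs.

From mathcomp Require Import all_boot.
From Stdlib Require Import Classical.

(* Let uv be an edge forming a maximal clique; maximality means
   that u and v have no common neighbour.  If u (or v) has no neighbour other
   than the other endpoint, then {u, v} = N[u] (or N[v]) is a simplicial
   clique.  Otherwise u has a neighbour x <> v and v a neighbour y <> u, and
   we show that G is complete bipartite with parts N(v) and N(u):
   - every a in N(v) is adjacent to every b in N(u), since otherwise the
     induced P4 b-u-v-a could only be settled by a common neighbour of u, v;
   - N(v) is independent, since two adjacent a, a' in N(v) would form a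
     diamond with v and x (and symmetrically N(u) is independent, using y);
   - N(u) u N(v) is closed under adjacency (again by settling a P4), hence
     by connectivity it contains every vertex. *)

Section SettledDiamondFree.

Context {T : finType} {e : rel T}.
Hypothesis e_sym : symmetric e.
Hypothesis e_irr : irreflexive e.

Lemma maximal_edge_no_common_nbr {u v : T} :
  e u v -> maximal_clique e [set u; v] -> forall w, e u w -> e v w -> False.
Proof.
move=> uv [_ maxK] w uw vw.
have clique_uvw : is_clique e [set u; v; w].
  move=> p q; rewrite !inE.
  by do 2!case/orP=> [/orP[]|] /eqP->; rewrite ?eqxx // => _;
     rewrite ?uv ?uw ?vw // e_sym ?uv ?uw ?vw.
have sub_uvw : [set u; v] \subset [set u; v; w].
  by apply/subsetP => z; rewrite !inE => ->.
have : w \in [set u; v; w] by rewrite !inE eqxx orbT.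
rewrite (maxK _ clique_uvw sub_uvw) !inE.
by case/orP=> /eqP wE; move: uw vw; rewrite wE e_irr.
Qed.

Lemma pendant_edge_simplicial (a b : T) :
  e a b -> (forall x, e a x -> x = b) -> simplicial_clique e [set a; b].
Proof.
move=> ab only_b.
have Na : closed_nbhd e a = [set a; b].
  apply/setP => z; rewrite /closed_nbhd !inE; case: (z =P a) => //= _.
  by apply/idP/eqP => [/only_b | ->].
exists a; split; last by [].
rewrite /simplicial Na => p q; rewrite !inE.
by do 2!case/orP=> /eqP->; rewrite ?eqxx // => _; rewrite // e_sym.
Qed.

Hypothesis e_diamond_free : diamond_free e.
Hypothesis e_settled :
  forall a b c d, induced_P4 e a b c d -> settled e a b c d.

Section TriangleFreeEdge.

Context {u v : T}.
Hypothesis uv : e u v.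
Hypothesis no_common : forall w, e u w -> e v w -> False.

Lemma cross_adjacent (a b : T) : e v a -> e u b -> e a b.
Proof.
move=> va ub; apply/negPn/negP => nab.
have P4 : induced_P4 e b u v a.
  split; [by rewrite e_sym | done | done | split].
  - by apply/negP => bv; apply: (no_common _ ub); rewrite e_sym.
  - by apply/negP => ua; apply: (no_common _ ua va).
  - by rewrite e_sym.
have [w [wu wv _ _]] := e_settled _ _ _ _ P4.
by apply: (no_common w); rewrite e_sym.
Qed.

(* If u has a neighbour x <> v, then N(v) is independent: two adjacent
   neighbours of v would form a diamond with v and x. *)
Lemma nbhd_independent {x : T} :
  e u x -> x != v -> forall a a', e v a -> e v a' -> ~~ e a a'.
Proof.
move=> ux xv a a' va va'; apply/negP => aa'; apply: e_diamond_free.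
exists v, x, a, a'; split.
- by rewrite eq_sym.
- by apply/negP => vx; apply: (no_common _ ux vx).
- done.
- split; [by rewrite e_sym | exact: cross_adjacent
         | by rewrite e_sym | exact: cross_adjacent].
Qed.

Lemma nbhd_step {s z : T} :
  (forall a a', e v a -> e v a' -> ~~ e a a') ->
  e v s -> e s z -> e u z || e v z.
Proof.
move=> indep vs sz; case uz: (e u z) => //=.
apply/negPn/negP => nvz.
have P4 : induced_P4 e z s v u.
  split; [by rewrite e_sym | by rewrite e_sym | by rewrite e_sym | split].
  - by rewrite e_sym.
  - by apply/negP => su; apply: (no_common s); rewrite // e_sym.
  - by rewrite e_sym uz.
have [w [ws wv _ _]] := e_settled _ _ _ _ P4.
by move: (indep w s); rewrite e_sym wv ws vs => /(_ isT isT).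
Qed.

End TriangleFreeEdge.

Lemma two_sided_edge_complete_bipartite {u v x y : T} :
  connected_graph e -> e u v -> (forall w, e u w -> e v w -> False) ->
  e u x -> x != v -> e v y -> y != u -> complete_bipartite e.
Proof.
move=> conn uv no_common ux xv vy yu.
have vu : e v u by rewrite e_sym.
have no_common' w : e v w -> e u w -> False by move=> vw uw; apply: (no_common w).
have indepV := nbhd_independent uv no_common ux xv.
have indepU := nbhd_independent vu no_common' vy yu.
pose S := [set z | e u z || e v z].
have S_closed : closed e S.
  have step s z : e s z -> s \in S -> z \in S.
    move=> sz; rewrite !inE => /orP[us | vs].
    + by rewrite orbC; apply: (nbhd_step vu no_common' indepU us sz).
    + exact: (nbhd_step uv no_common indepV vs sz).
  by move=> a b ab; apply/idP/idP; apply: step; rewrite // e_sym.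
have S_all z : e u z || e v z.
  have := closed_connect S_closed (conn u z).
  by rewrite !inE vu orbT => <-.
exists [set z | e v z]; split; [|split].
- by apply/set0Pn; exists u; rewrite inE.
- by apply/set0Pn; exists v; rewrite !inE e_irr.
- move=> a b; rewrite !inE.
  have := S_all a; have := S_all b.
  case va: (e v a); case vb: (e v b); rewrite ?orbT ?orbF => // ub ua.
  + exact/negbTE/indepV.
  + exact: (cross_adjacent uv no_common).
  + by rewrite e_sym; apply: (cross_adjacent uv no_common).
  + exact/negbTE/indepU.
Qed.

End SettledDiamondFree.

Theorem lemma5 (T : finType) (e : rel T) :
  simple_graph e -> connected_graph e -> diamond_free e ->
  (forall a b c d, induced_P4 e a b c d -> settled e a b c d) ->
  complete_bipartite e \/
  (forall u v, e u v -> maximal_clique e [set u; v] ->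
     simplicial_clique e [set u; v]).
Proof.
move=> [e_sym e_irr] conn dfree settledP4.
case: (classic (complete_bipartite e)) => [|not_bip]; [by left | right].
move=> u v uv maxK.
have no_common := maximal_edge_no_common_nbr e_sym e_irr uv maxK.
case: (boolP [exists x, e u x && (x != v)]) => [/existsP[x /andP[ux xv]] | /existsPn onlyV].
  case: (boolP [exists y, e v y && (y != u)]) => [/existsP[y /andP[vy yu]] | /existsPn onlyU].
    by case: not_bip; apply: (two_sided_edge_complete_bipartite e_sym e_irr dfree
                                settledP4 conn uv no_common ux xv vy yu).
  rewrite setUC; apply: pendant_edge_simplicial => //; first by rewrite e_sym.
  by move=> z vz; apply/eqP; have := onlyU z; rewrite vz negbK.
apply: pendant_edge_simplicial => // z uz.
by apply/eqP; have := onlyV z; rewrite uz negbK.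
Qed.
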